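(* Let $q=2^f$ with $f\ge4$, let $q_0<q$ be a power of $2$ with $\gcd(q-1,q_0^2-1)=1$, let $u\in\mathbb{F}_q\setminus\{0,1\}$, and define $\eta=1+\left(\frac{u}{u+1}\right)^{1/(q_0-1)}$. Then for all $a,b\in\mathbb{F}_q^*$: (1) $\Phi_{a,ua^{q_0+1}}\xrightarrow{u}\Phi_{b,ub^{q_0+1}}$ iff $b=a/\eta$; (2) $\Phi_{a,ua^{q_0+1}}\xrightarrow{u+1}\Phi_{b,ub^{q_0+1}}$ iff $b=a\eta$; (3) $\Phi_{a,(u+1)a^{q_0+1}}\xrightarrow{u}\Phi_{b,(u+1)b^{q_0+1}}$ iff $b=a\cdot\frac{\eta}{1+\eta}$; (4) $\Phi_{a,(u+1)a^{q_0+1}}\xrightarrow{u+1}\Phi_{b,(u+1)b^{q_0+1}}$ iff $b=a\cdot\frac{1+\eta}{\eta}$; (5) $\Phi_{a,ua^{q_0+1}}\xrightarrow{u}\Phi_{b,(u+1)b^{q_0+1}}$ iff $b=\frac{a}{1+\eta}$; (6) $\Phi_{a,ua^{q_0+1}}\xrightarrow{u+1}\Phi_{b,(u+1)b^{q_0+1}}$ iff $\left(\frac ab\right)^{q_0+1}+u\left(\frac ab\right)^{q_0}+(u+1)\frac ab+1=0$.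
   Context: For $a,c\in\mathbb{F}_q$ let $\Phi_{a,c}=\begin{bmatrix}1&0&0\\ a&1&0\\ c&a^{q_0}&1\end{bmatrix}$, $K=\{\Phi_{a,c}\}\le GL(3,\mathbb{F}_q)$, and for $v\in\mathbb{F}_q$ let $\Omega_v=\{\Phi_{a,va^{q_0+1}}: a\in\mathbb{F}_q^*\}$. For $x,y\in K$ and $v\in\mathbb{F}_q$ write $x\xrightarrow{v}y$ if $xy^{-1}\in\Omega_v$. The $(q_0-1)$-th root is the inverse of the bijection $x\mapsto x^{q_0-1}$ of $\mathbb{F}_q$ (a bijection since $\gcd(q_0-1,q-1)=1$). *)

From HB Require Import structures.
From mathcomp Require Import all_boot all_order all_algebra.
Set Implicit Arguments. Unset Strict Implicit. Unset Printing Implicit Defensive.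
Import GRing.Theory.
Local Open Scope ring_scope.

Section Defs.
Variable F : finFieldType.

Definition Phi (q0 : nat) (a c : F) : 'M[F]_3 :=
  \matrix_(i < 3, j < 3)
    if (i == j :> nat) then 1
    else if (i == 1%N :> nat) && (j == 0%N :> nat) then a
    else if (i == 2%N :> nat) && (j == 0%N :> nat) then c
    else if (i == 2%N :> nat) && (j == 1%N :> nat) then a ^+ q0
    else 0.

Definition Omega (q0 : nat) (v : F) : {set 'M[F]_3} :=
  [set Phi q0 a (v * a ^+ (q0 + 1)) | a in [set a : F | a != 0]].

Definition arrow (q0 : nat) (v : F) (x y : 'M[F]_3) : bool :=
  x * y^-1 \in Omega q0 v.

(* n-th root: the inverse of the map x |-> x^n (meaningful when this map is
   a bijection of F, as for n = q0 - 1 under the hypotheses). *)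
Definition root_pow (n : nat) (x : F) : F :=
  odflt 0 [pick y : F | y ^+ n == x].
End Defs.

From mathcomp Require Import all_boot all_order all_algebra all_field.
From mathcomp Require Import ring zify.
Import GRing.Theory.
Local Open Scope ring_scope.

(* Identify Phi_{a,c} with the pair (a,c): the product is
   (a,c)(b,d) = (a+b, c + a^q0 b + d), and in characteristic 2 the inverse of
   (b,d) is (b, d + b^(q0+1)).  So x --v--> y is a single equation in a and b,
   homogeneous of degree q0+1.  In cases (1)-(5) this equation is the binary
   form (u+1) X^q0 Y + u X Y^q0 (the homogenised (u+1) X^q0 + u X) evaluated
   at the linear forms (a+b, b), (a+b, a), (a, a+b), (b, a+b) and (a, b).  Its
   zeros with X, Y <> 0 are exactly X = r Y, where r = 1 + eta is the unique
   solution of r^(q0-1) = u/(u+1): unique because gcd(q0-1, q-1) = 1 makes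
   x |-> x^(q0-1) a bijection of F.  Solving the linear equation X = r Y for b
   gives (1)-(5); (6) is the equation itself, divided by b^(q0+1). *)

Section CoprimePower.
Variable F : finFieldType.

Lemma expf_1_mul_card (x : F) k : x ^+ (1 + k * #|F|.-1) = x.
Proof.
have xM : x * x ^+ #|F|.-1 = x.
  by rewrite -exprS prednK ?expf_card //; apply/card_gt0P; exists 0.
elim: k => [|k IHk]; first by rewrite expr1.
by rewrite mulSn addnCA exprD IHk mulrC xM.
Qed.

Lemma expf_coprime_inj {n} : (0 < n)%N -> coprime n #|F|.-1 ->
  injective (fun x : F => x ^+ n).
Proof.
move=> n_gt0 co_n x y /= xy.
have [k _] := Bezoutl #|F|.-1 n_gt0; rewrite (eqP co_n) => /dvdnP[m kn].
by rewrite -(expf_1_mul_card x k) -(expf_1_mul_card y k) kn mulnC !exprM xy.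
Qed.

Lemma root_powP n (x y : F) : (0 < n)%N -> coprime n #|F|.-1 ->
  y ^+ n = x <-> y = root_pow n x.
Proof.
move=> n_gt0 co_n; have inj_n := expf_coprime_inj n_gt0 co_n.
have root_powK : root_pow n x ^+ n = x.
  rewrite /root_pow; case: pickP => [z /eqP // | no_root].
  have /codomP[z xz] := injF_onto inj_n x.
  by have := no_root z; rewrite /= xz eqxx.
by split=> [yx | ->] //; apply: inj_n; rewrite /= root_powK.
Qed.

End CoprimePower.

Section UnitriangularGroup.
Variables (F : finFieldType) (q0 : nat).
Hypothesis pcharF2 : 2 \in [pchar F].
Hypothesis q0_2nat : (2%N).-nat q0.

Let two0 : 2 = 0 :> F := pcharf0 pcharF2.

Lemma exprD_q0 (x y : F) : (x + y) ^+ q0 = x ^+ q0 + y ^+ q0.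
Proof. by apply: exprDn_pchar; rewrite (eq_pnat _ (pcharf_eq pcharF2)). Qed.

Lemma addr_eq0_pchar2 (x y : F) : (x + y == 0) = (x == y).
Proof. by rewrite addr_eq0 oppr_pchar2. Qed.

Lemma eq_pchar2_scale {k x y z w : F} :
  k != 0 -> x + y = k * (z + w) -> x = y <-> z = w.
Proof.
move=> k_neq0 xyE; rewrite (rwP eqP) (rwP (z =P w)).
rewrite -(addr_eq0_pchar2 x) -(addr_eq0_pchar2 z) xyE.
by rewrite mulf_eq0 (negbTE k_neq0).
Qed.

Lemma Phi_mul (a c b d : F) :
  Phi q0 a c * Phi q0 b d = Phi q0 (a + b) (c + a ^+ q0 * b + d).
Proof.
rewrite -mulmxE; apply/matrixP => i j.
rewrite !mxE !big_ord_recl big_ord0 !mxE exprD_q0.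
by case: i => [[|[|[|i]]] //= ?]; case: j => [[|[|[|j]]] //= ?]; ring.
Qed.

Lemma Phi_one : Phi q0 (0 : F) 0 = 1.
Proof.
have /negbTE q0_neq0 : q0 != 0%N by case/andP: q0_2nat; rewrite lt0n.
apply/matrixP => i j; rewrite !mxE expr0n q0_neq0.
by case: i => [[|[|[|i]]] //= ?]; case: j => [[|[|[|j]]] //= ?].
Qed.

Lemma Phi_inv (b d : F) : (Phi q0 b d)^-1 = Phi q0 b (d + b ^+ (q0 + 1)).
Proof.
have PhiK : Phi q0 b d * Phi q0 b (d + b ^+ (q0 + 1)) = 1.
  by rewrite Phi_mul addn1 exprSr !(addrr_pchar2 pcharF2) Phi_one.
have Phi_unit : Phi q0 b d \is a GRing.unit.
  by move: PhiK; rewrite -mulmxE => /mulmx1_unit[].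
by rewrite -[RHS]mul1r -(mulVr Phi_unit) -mulrA PhiK mulr1.
Qed.

Lemma Phi_inj (a c a' c' : F) : Phi q0 a c = Phi q0 a' c' -> a = a' /\ c = c'.
Proof.
move=> /matrixP PhiE.
by have := PhiE 1 0; have := PhiE 2 0; rewrite !mxE.
Qed.

Lemma arrow_PhiP (v a c b d : F) :
  arrow q0 v (Phi q0 a c) (Phi q0 b d) <->
  a + b != 0 /\ c + a ^+ q0 * b + d + b ^+ (q0 + 1) = v * (a + b) ^+ (q0 + 1).
Proof.
rewrite /arrow Phi_inv Phi_mul addrA; split.
  by case/imsetP=> x; rewrite inE => x_neq0 /Phi_inj[-> ->].
by case=> ab_neq0 cdE; apply/imsetP; exists (a + b); rewrite ?inE ?cdE.
Qed.

Lemma arrow_Phi_homP (al be v a b : F) :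
  arrow q0 v (Phi q0 a (al * a ^+ (q0 + 1))) (Phi q0 b (be * b ^+ (q0 + 1))) <->
  a + b != 0 /\
  (al + v) * a ^+ (q0 + 1) + (1 + v) * a ^+ q0 * b + v * a * b ^+ q0
    + (be + 1 + v) * b ^+ (q0 + 1) = 0.
Proof.
rewrite arrow_PhiP; apply: and_iff_compat_l.
apply: (eq_pchar2_scale (oner_neq0 F)).
by rewrite addn1 !exprS exprD_q0; apply: subr0_eq; ring: two0.
Qed.

Lemma arrow_Phi_u_u1_u1 (u a b : F) : a != 0 -> b != 0 ->
  arrow q0 (u + 1) (Phi q0 a (u * a ^+ (q0 + 1)))
    (Phi q0 b ((u + 1) * b ^+ (q0 + 1))) <->
  (a / b) ^+ (q0 + 1) + u * (a / b) ^+ q0 + (u + 1) * (a / b) + 1 = 0.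
Proof.
move=> a_neq0 b_neq0; rewrite arrow_Phi_homP.
set Q := (X in _ /\ X = 0 <-> _); set T := (X in _ <-> X = 0).
have bq_neq0 : b ^+ (q0 + 1) != 0 by rewrite expf_neq0.
have -> : Q = 0 <-> T = 0.
  apply: (eq_pchar2_scale bq_neq0); rewrite /Q /T addn1 !exprS !expr_div_n.
  by apply: subr0_eq; field: two0; rewrite b_neq0 expf_neq0.
split=> [[] // | T0]; split=> //; apply: contra_neq (oner_neq0 F) => /eqP.
rewrite addr_eq0_pchar2 => /eqP ab; rewrite -T0 /T ab divff // !expr1n.
by apply/esym/subr0_eq; ring: two0.
Qed.

Definition frob_form (u x y : F) : F := (u + 1) * x ^+ q0 * y + u * x * y ^+ q0.

Section Kernel.
Variables u r : F.
Hypothesis q0_gt1 : (1 < q0)%N.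
Hypothesis u_neq0 : u != 0.
Hypothesis u_neq1 : u != 1.
Hypothesis r_root : forall w, w ^+ (q0 - 1) = u / (u + 1) <-> w = r.

Lemma frob_form_eq0 {x y : F} : x != 0 -> y != 0 -> frob_form u x y = 0 <-> x = r * y.
Proof.
move=> x_neq0 y_neq0.
have u1_neq0 : u + 1 != 0 by rewrite addr_eq0_pchar2.
have exprq0 z : z ^+ q0 = z * z ^+ (q0 - 1) by rewrite -exprS subn1 prednK // ltnW.
have -> : frob_form u x y = x * y ^+ q0 * ((u + 1) * (x / y) ^+ (q0 - 1) + u).
  by rewrite /frob_form !exprq0 expr_div_n; field; rewrite expf_neq0.
have -> : x = r * y <-> x / y = r by split=> [-> | <-]; rewrite ?mulfK ?divfK.
rewrite -r_root (rwP eqP) !mulf_eq0 expf_eq0 (negbTE x_neq0) (negbTE y_neq0) andbF /=.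
rewrite addr_eq0_pchar2.
have uK : (u + 1) * (u / (u + 1)) = u by rewrite mulrC divfK.
by split=> [/eqP uE | ->]; [apply: (mulfI u1_neq0); rewrite uE uK | rewrite uK].
Qed.

Lemma root_neq0 : r != 0.
Proof.
apply/eqP => r0; have := proj2 (r_root r) erefl.
rewrite r0 expr0n subn_eq0 leqNgt q0_gt1 /= => /esym/eqP.
by rewrite mulf_eq0 invr_eq0 addr_eq0_pchar2 (negbTE u_neq0) (negbTE u_neq1).
Qed.

Lemma root_neq1 : r != 1.
Proof.
apply/eqP => r1; have := proj2 (r_root r) erefl.
rewrite r1 expr1n => /(congr1 ( *%R^~ (u + 1))).
rewrite mul1r divfK ?addr_eq0_pchar2 // => /eqP.
by rewrite -addr_eq0_pchar2 addrAC addrr_pchar2 // add0r oner_eq0.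
Qed.

Let r1_neq0 : 1 + r != 0.
Proof. by rewrite addr_eq0_pchar2 eq_sym root_neq1. Qed.

Lemma arrow_Phi_frob_formP (al be v a b N D : F) :
  (al + v) * a ^+ (q0 + 1) + (1 + v) * a ^+ q0 * b + v * a * b ^+ q0
    + (be + 1 + v) * b ^+ (q0 + 1) = frob_form u N D ->
  (a + b != 0 -> N != 0 /\ D != 0) -> (N = r * D -> a + b != 0) ->
  arrow q0 v (Phi q0 a (al * a ^+ (q0 + 1))) (Phi q0 b (be * b ^+ (q0 + 1))) <->
  N = r * D.
Proof.
move=> QE nondeg ab_neq0; rewrite arrow_Phi_homP QE.
split=> [[/nondeg[N_neq0 D_neq0] /(frob_form_eq0 N_neq0 D_neq0)] // | NrD].
have [N_neq0 D_neq0] := nondeg (ab_neq0 NrD).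
by split; [exact: ab_neq0 | exact/(frob_form_eq0 N_neq0 D_neq0)].
Qed.

Lemma arrow_Phi_u_u_u (a b : F) : a != 0 -> b != 0 ->
  arrow q0 u (Phi q0 a (u * a ^+ (q0 + 1))) (Phi q0 b (u * b ^+ (q0 + 1))) <->
  b = a / (1 + r).
Proof.
move=> a_neq0 b_neq0; rewrite (@arrow_Phi_frob_formP _ _ _ _ _ (a + b) b).
- by apply: (eq_pchar2_scale r1_neq0); field.
- by rewrite /frob_form addn1 !exprS exprD_q0; apply: subr0_eq; ring: two0.
- by [].
- by move=> ->; rewrite mulf_neq0 ?root_neq0.
Qed.

Lemma arrow_Phi_u_u_u1 (a b : F) : a != 0 -> b != 0 ->
  arrow q0 (u + 1) (Phi q0 a (u * a ^+ (q0 + 1))) (Phi q0 b (u * b ^+ (q0 + 1))) <->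
  b = a * (1 + r).
Proof.
move=> a_neq0 b_neq0; rewrite (@arrow_Phi_frob_formP _ _ _ _ _ (a + b) a).
- by apply: (eq_pchar2_scale (oner_neq0 F)); ring.
- by rewrite /frob_form addn1 !exprS exprD_q0; apply: subr0_eq; ring: two0.
- by [].
- by move=> ->; rewrite mulf_neq0 ?root_neq0.
Qed.

Lemma arrow_Phi_u1_u1_u (a b : F) : a != 0 -> b != 0 ->
  arrow q0 u (Phi q0 a ((u + 1) * a ^+ (q0 + 1)))
    (Phi q0 b ((u + 1) * b ^+ (q0 + 1))) <->
  b = a * ((1 + r) / r).
Proof.
move=> a_neq0 b_neq0; rewrite (@arrow_Phi_frob_formP _ _ _ _ _ a (a + b)).
- by apply: (eq_pchar2_scale root_neq0); field; rewrite root_neq0.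
- by rewrite /frob_form addn1 !exprS exprD_q0; apply: subr0_eq; ring: two0.
- by [].
- by move=> aE; apply: contra_neq a_neq0 => ab0; rewrite aE ab0 mulr0.
Qed.

Lemma arrow_Phi_u1_u1_u1 (a b : F) : a != 0 -> b != 0 ->
  arrow q0 (u + 1) (Phi q0 a ((u + 1) * a ^+ (q0 + 1)))
    (Phi q0 b ((u + 1) * b ^+ (q0 + 1))) <->
  b = a * (r / (1 + r)).
Proof.
move=> a_neq0 b_neq0; rewrite (@arrow_Phi_frob_formP _ _ _ _ _ b (a + b)).
- by apply: (eq_pchar2_scale r1_neq0); field.
- by rewrite /frob_form addn1 !exprS exprD_q0; apply: subr0_eq; ring: two0.
- by [].
- by move=> bE; apply: contra_neq b_neq0 => ab0; rewrite bE ab0 mulr0.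
Qed.

Lemma arrow_Phi_u_u1_u (a b : F) : a != 0 -> b != 0 ->
  arrow q0 u (Phi q0 a (u * a ^+ (q0 + 1))) (Phi q0 b ((u + 1) * b ^+ (q0 + 1))) <->
  b = a / r.
Proof.
move=> a_neq0 b_neq0; rewrite (@arrow_Phi_frob_formP _ _ _ _ _ a b).
- by apply: (eq_pchar2_scale root_neq0); field; rewrite root_neq0.
- by rewrite /frob_form addn1 !exprS; apply: subr0_eq; ring: two0.
- by [].
- by move=> ->; rewrite -[X in _ + X]mul1r -mulrDl addrC mulf_neq0 ?r1_neq0.
Qed.

End Kernel.

End UnitriangularGroup.

Theorem lemma6p1 (F : finFieldType) (f q0 : nat) :
  (4 <= f)%N -> #|F| = (2 ^ f)%N ->
  (exists e : nat, q0 = (2 ^ e)%N) -> (q0 < 2 ^ f)%N ->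
  coprime (2 ^ f - 1) (q0 ^ 2 - 1) ->
  forall u : F, u != 0 -> u != 1 ->
  let eta := 1 + root_pow (q0 - 1) (u / (u + 1)) in
  forall a b : F, a != 0 -> b != 0 ->
  (arrow q0 u (Phi q0 a (u * a ^+ (q0 + 1))) (Phi q0 b (u * b ^+ (q0 + 1)))
     <-> b = a / eta) /\
  (arrow q0 (u + 1) (Phi q0 a (u * a ^+ (q0 + 1))) (Phi q0 b (u * b ^+ (q0 + 1)))
     <-> b = a * eta) /\
  (arrow q0 u (Phi q0 a ((u + 1) * a ^+ (q0 + 1))) (Phi q0 b ((u + 1) * b ^+ (q0 + 1)))
     <-> b = a * (eta / (1 + eta))) /\
  (arrow q0 (u + 1) (Phi q0 a ((u + 1) * a ^+ (q0 + 1))) (Phi q0 b ((u + 1) * b ^+ (q0 + 1)))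
     <-> b = a * ((1 + eta) / eta)) /\
  (arrow q0 u (Phi q0 a (u * a ^+ (q0 + 1))) (Phi q0 b ((u + 1) * b ^+ (q0 + 1)))
     <-> b = a / (1 + eta)) /\
  (arrow q0 (u + 1) (Phi q0 a (u * a ^+ (q0 + 1))) (Phi q0 b ((u + 1) * b ^+ (q0 + 1)))
     <-> (a / b) ^+ (q0 + 1) + u * (a / b) ^+ q0 + (u + 1) * (a / b) + 1 = 0).
Proof.
move=> f_ge4 cardF [e q0E] _ coprime_q u u_neq0 u_neq1 eta a b a_neq0 b_neq0.
have pcharF2 : 2 \in [pchar F] := card_finPcharP cardF (isT : prime 2).
have q0_2nat : (2%N).-nat q0 by rewrite q0E pnatX pnat_id.
have q0_gt1 : (1 < q0)%N.
  move: coprime_q; rewrite q0E; case: e {q0E} => [|e] coprime_q.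
    move: coprime_q; rewrite expn0 /coprime exp1n subnn gcdn0 => /eqP q_eq2.
    have : (16 <= 2 ^ f)%N by rewrite -[16%N]/(2 ^ 4)%N leq_exp2l.
    lia.
  by rewrite expnS; have := expn_gt0 2 e; lia.
have coprime_root : coprime (q0 - 1) #|F|.-1.
  rewrite cardF -subn1 coprime_sym; apply: coprime_dvdr coprime_q.
  by rewrite -(exp1n 2) subn_sqr dvdn_mulr.
set r := root_pow (q0 - 1) (u / (u + 1)).
have r_root w : w ^+ (q0 - 1) = u / (u + 1) <-> w = r.
  by apply: root_powP; rewrite ?subn_gt0.
rewrite /eta -/r !(addKr_pchar2 pcharF2).
split; first exact: arrow_Phi_u_u_u.
split; first exact: arrow_Phi_u_u_u1.
split; first exact: arrow_Phi_u1_u1_u.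
split; first exact: arrow_Phi_u1_u1_u1.
split; first exact: arrow_Phi_u_u1_u.
exact: arrow_Phi_u_u1_u1.
Qed.
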